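(* For every integer $j\geq 2$ and every integer $m\geq 0$ with $(j,m)\notin\{(2,0),(3,0)\}$, \[ \lim_{t\to -1}(1-t^2)^{\frac{j-3}{2}+m}g_j^{(m)}(t)=0,\qquad \lim_{t\to +1}(1-t^2)^{\frac{j-3}{2}+m}g_j^{(m)}(t)=-(j-1)\,2^{m-2}\,\frac{\Gamma\big(\frac{j-3}{2}+m\big)}{\pi^{\frac{j-1}{2}}}. \]
   Context: $\omega_j$ is the surface area of $\mathbb{S}^{j-1}\subseteq\mathbb{R}^j$. The Berg functions $g_j\in C^\infty(-1,1)$, $j\ge2$, are defined by $g_2(t)=\frac{1}{2\pi}(\pi-\arccos t)(1-t^2)^{1/2}-\frac{1}{4\pi}t$, $g_3(t)=\frac{1}{2\pi}\big(1+t\log(1-t)+(\tfrac43-\log 2)t\big)$, $g_{j+2}(t)=\frac{j+1}{2\pi}g_j(t)+\frac{j+1}{2\pi(j-1)}t\,g_j'(t)+\frac{j+1}{2\pi\omega_j}t$. $g_j^{(m)}$ denotes the $m$-th derivative. *)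

From Stdlib Require Import Reals.
From Coquelicot Require Import Coquelicot.
Open Scope R_scope.

Definition Gamma (s : R) : R :=
  RInt_gen (fun t => Rpower t (s - 1) * exp (- t))
           (at_right 0) (Rbar_locally p_infty).

(* omega_j = surface area of S^{j-1} in R^j = 2 pi^(j/2) / Gamma(j/2). *)
Definition omega (j : nat) : R :=
  2 * Rpower PI (INR j / 2) / Gamma (INR j / 2).

Definition g2 (t : R) : R :=
  1 / (2 * PI) * (PI - acos t) * sqrt (1 - t ^ 2) - 1 / (4 * PI) * t.

Definition g3 (t : R) : R :=
  1 / (2 * PI) * (1 + t * ln (1 - t) + (4 / 3 - ln 2) * t).

(* Berg functions g_j for j >= 2 (g 0, g 1 are irrelevant placeholders):
   g_{j+2} = (j+1)/(2 pi) g_j + (j+1)/(2 pi (j-1)) t g_j' + (j+1)/(2 pi omega_j) t. *)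
Fixpoint berg (j : nat) : R -> R :=
  match j with
  | 0%nat => fun _ => 0
  | 1%nat => fun _ => 0
  | 2%nat => g2
  | 3%nat => g3
  | S (S k as k') =>
      fun t =>
        let J := INR k in
        (J + 1) / (2 * PI) * berg k t
        + (J + 1) / (2 * PI * (J - 1)) * t * Derive (berg k) t
        + (J + 1) / (2 * PI * omega k) * t
  end.

From Stdlib Require Import Reals Lra Lia Factorial.
From Coquelicot Require Import Coquelicot.
Open Scope R_scope.

(* Write w = 1 - t^2 and s_j(m) = (j - 3)/2 + m.  For j = 2 and j = 3 the derivatives of
   g_j on (-1, 1) are explicit: g_2^(m) is ((pi - acos t) P_m(t) sqrt w + Q_m(t) w) / (2 pi w^m)
   plus a polynomial, with polynomials P_m, Q_m, and g_3^(m) is a rational function of 1 - t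
   for m >= 2.  Hence for m >= 1, w^(s_j(m)) g_j^(m) extends continuously to [-1, 1] and its
   limits are its values at -1 and 1; the constants come from P_m(1) together with Gamma at
   half-integers (Gamma(1/2) = sqrt pi, by Feynman's trick for the Gaussian integral), resp.
   at integers.
   Differentiating the recurrence m times gives
     g_(j+2)^(m) = a_j g_j^(m) + b_j (t g_j^(m+1) + m g_j^(m)) + c_j (d/dt)^m t,
   and since s_(j+2)(m) = s_j(m+1) = s_j(m) + 1, after weighting only b_j t w^(s_j(m+1)) g_j^(m+1)
   survives at the endpoints.  So the limits pass from (j, m+1) to (j+2, m), by induction on j;
   at m = 0 the induction only needs that w^(s_j(0)+1) g_j vanishes at both endpoints, which
   also holds in the excluded cases (2, 0) and (3, 0). *)

Section FilterLimits.

Context {T : Type} {F : (T -> Prop) -> Prop} {FF : Filter F}.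

Lemma lim_const (c : R) : filterlim (fun _ => c) F (locally c).
Proof. apply filterlim_const. Qed.

Lemma lim_plus (f g : T -> R) a b :
  filterlim f F (locally a) -> filterlim g F (locally b) ->
  filterlim (fun x => f x + g x) F (locally (a + b)).
Proof.
  intros Hf Hg; eapply filterlim_comp_2; [exact Hf | exact Hg |].
  apply (@filterlim_plus R_AbsRing R_NormedModule).
Qed.

Lemma lim_mult (f g : T -> R) a b :
  filterlim f F (locally a) -> filterlim g F (locally b) ->
  filterlim (fun x => f x * g x) F (locally (a * b)).
Proof.
  intros Hf Hg; eapply filterlim_comp_2; [exact Hf | exact Hg |].
  apply (@filterlim_mult R_AbsRing).
Qed.

Lemma lim_opp (f : T -> R) a :
  filterlim f F (locally a) -> filterlim (fun x => - f x) F (locally (- a)).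
Proof.
  intros Hf; eapply filterlim_comp; [exact Hf |].
  apply (@filterlim_opp R_AbsRing R_NormedModule).
Qed.

Lemma lim_opp_0 (f : T -> R) :
  filterlim f F (locally 0) -> filterlim (fun x => - f x) F (locally 0).
Proof. intros Hf; rewrite <- Ropp_0; now apply lim_opp. Qed.

Lemma lim_minus (f g : T -> R) a b :
  filterlim f F (locally a) -> filterlim g F (locally b) ->
  filterlim (fun x => f x - g x) F (locally (a - b)).
Proof. intros Hf Hg; apply lim_plus; [exact Hf | apply lim_opp, Hg]. Qed.

Lemma lim_pow (f : T -> R) a n :
  filterlim f F (locally a) -> filterlim (fun x => f x ^ n) F (locally (a ^ n)).
Proof.
  intros Hf; induction n as [|n IH]; [apply lim_const | apply lim_mult; assumption].
Qed.

Lemma lim_continuous (h : R -> R) (f : T -> R) a :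
  continuous h a -> filterlim f F (locally a) ->
  filterlim (fun x => h (f x)) F (locally (h a)).
Proof. intros Hh Hf; eapply filterlim_comp; eassumption. Qed.

Lemma lim_eq (f : T -> R) (a b : R) :
  a = b -> filterlim f F (locally a) -> filterlim f F (locally b).
Proof. now intros <-. Qed.

Lemma lim_within (D : R -> Prop) (f : T -> R) (x : R) :
  filterlim f F (locally x) -> F (fun t => D (f t)) -> filterlim f F (within D (locally x)).
Proof.
  intros Hf HD P HP; unfold filtermap.
  apply (filter_imp (fun t => D (f t) /\ (D (f t) -> P (f t)))); [tauto |].
  now apply filter_and; [| apply (Hf (fun y => D y -> P y))].
Qed.

End FilterLimits.

Lemma lim_at_right_id a : filterlim (fun t => t) (at_right a) (locally a).
Proof. eapply filterlim_filter_le_1; [apply filter_le_within | apply filterlim_id]. Qed.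

Lemma lim_at_left_id a : filterlim (fun t => t) (at_left a) (locally a).
Proof. eapply filterlim_filter_le_1; [apply filter_le_within | apply filterlim_id]. Qed.

Lemma lim_Rpower_0 a : 0 < a -> filterlim (fun x => Rpower x a) (at_right 0) (locally 0).
Proof.
  intros Ha; unfold Rpower.
  eapply filterlim_comp; [| apply is_lim_exp_m].
  eapply filterlim_comp; [apply is_lim_ln_0 |].
  intros P [M HM]; exists (M / a); intros x Hx; apply HM.
  apply Rmult_lt_reg_l with (/ a); [now apply Rinv_0_lt_compat |].
  replace (/ a * (a * x)) with x by (field; lra).
  unfold Rdiv in Hx; lra.
Qed.

Lemma continuous_of_ex_derive (f : R -> R) x : ex_derive f x -> continuous f x.
Proof. exact (@ex_derive_continuous R_AbsRing R_NormedModule f x). Qed.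

Lemma is_derive_Rmult (f g : R -> R) x df dg :
  is_derive f x df -> is_derive g x dg ->
  is_derive (fun t => f t * g t) x (df * g x + f x * dg).
Proof. intros Hf Hg; apply (is_derive_mult f g x df dg Hf Hg), Rmult_comm. Qed.

Lemma is_derive_Rpower s x :
  0 < x -> is_derive (fun t => Rpower t s) x (s * Rpower x (s - 1)).
Proof. intros Hx; now apply is_derive_Reals, derivable_pt_lim_power. Qed.

(** * Gamma at integers and half-integers *)

Definition gamma_integrand (s t : R) : R := Rpower t (s - 1) * exp (- t).

Definition is_Gamma (s l : R) : Prop :=
  is_RInt_gen (gamma_integrand s) (at_right 0) (Rbar_locally p_infty) l.

Lemma Gamma_eq s l : is_Gamma s l -> Gamma s = l.
Proof. exact (is_RInt_gen_unique _ l). Qed.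

Lemma lim_Rpower_mul_exp_p_infty s : 0 < s ->
  filterlim (fun t => Rpower t s * exp (- t)) (Rbar_locally p_infty) (locally 0).
Proof.
  intros Hs.
  apply filterlim_ext_loc with (fun t => Rpower (t * exp (- t / s)) s).
  { exists 0; intros t Ht.
    rewrite <- Rpower_mult_distr by (apply exp_pos || lra).
    unfold Rpower at 2; rewrite ln_exp; do 3 f_equal; field; lra. }
  apply (filterlim_comp _ _ _ _ (fun x => Rpower x s) _ (at_right 0)); [| now apply lim_Rpower_0].
  apply lim_within; [| exists 0; intros t Ht; apply Rmult_lt_0_compat; [lra | apply exp_pos]].
  apply filterlim_ext with (fun t => - s * ((- t / s) * exp (- t / s))).
  { intros t; field; lra. }
  apply (lim_eq _ (- s * 0)); [apply Rmult_0_r |].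
  apply lim_mult; [apply lim_const |].
  apply (filterlim_comp _ _ _ (fun t => - t / s) (fun y => y * exp y) _ (Rbar_locally m_infty));
    [| apply is_lim_mul_exp_m].
  intros P [M HM]; exists (- M * s); intros t Ht; apply HM.
  apply (Rmult_lt_reg_r s); [exact Hs |]; unfold Rdiv; rewrite Rmult_assoc, Rinv_l; lra.
Qed.

Lemma lim_Rpower_mul_exp_0 s : 0 < s ->
  filterlim (fun t => Rpower t s * exp (- t)) (at_right 0) (locally 0).
Proof.
  intros Hs; apply (lim_eq _ (0 * exp (- 0))); [apply Rmult_0_l |].
  apply lim_mult; [now apply lim_Rpower_0 |].
  apply (lim_continuous (fun t => exp (- t))); [| apply lim_at_right_id].
  apply continuous_of_ex_derive; auto_derive; auto.
Qed.

Lemma filter_prod_0_p_infty_pos : filter_prod (at_right 0) (Rbar_locally p_infty)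
  (fun ab => forall x, Rmin (fst ab) (snd ab) <= x <= Rmax (fst ab) (snd ab) -> 0 < x).
Proof.
  apply (Filter_prod _ _ _ (fun a => 0 < a) (fun b => 0 < b)).
  - now exists posreal_one.
  - now exists 0.
  - intros a b Ha Hb x Hx; simpl in Hx; pose proof (Rmin_glb_lt a b 0 Ha Hb); lra.
Qed.

Lemma is_RInt_gen_0_p_infty_derive (phi f : R -> R) la lb :
  (forall x, 0 < x -> is_derive phi x (f x)) ->
  (forall x, 0 < x -> continuous f x) ->
  filterlim phi (at_right 0) (locally la) ->
  filterlim phi (Rbar_locally p_infty) (locally lb) ->
  is_RInt_gen f (at_right 0) (Rbar_locally p_infty) (lb - la).
Proof.
  intros Hd Hc Ha Hb.
  assert (HD : forall x, 0 < x -> Derive phi x = f x) by (intros; now apply is_derive_unique, Hd).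
  apply is_RInt_gen_ext with (Derive phi).
  { eapply filter_imp; [| apply filter_prod_0_p_infty_pos].
    intros ab Hab x Hx; apply HD, Hab; lra. }
  apply is_RInt_gen_Derive; try assumption;
    eapply filter_imp; try apply filter_prod_0_p_infty_pos; intros ab Hab x Hx.
  - eexists; now apply Hd, Hab.
  - apply continuous_ext_loc with f; [| now apply Hc, Hab].
    apply (filter_imp (fun y => 0 < y)); [intros y Hy; symmetry; now apply HD |].
    now apply (open_gt 0 x), Hab.
Qed.

Lemma continuous_gamma_integrand s x : 0 < x -> continuous (gamma_integrand s) x.
Proof.
  intros Hx; apply continuous_of_ex_derive; unfold gamma_integrand.
  auto_derive; eexists; now apply is_derive_Rpower.
Qed.

Lemma is_derive_Rpower_mul_exp s x : 0 < x ->
  is_derive (fun t => Rpower t s * exp (- t)) x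
    (s * Rpower x (s - 1) * exp (- x) - Rpower x s * exp (- x)).
Proof.
  intros Hx.
  replace (s * Rpower x (s - 1) * exp (- x) - Rpower x s * exp (- x))
    with (s * Rpower x (s - 1) * exp (- x) + Rpower x s * - exp (- x)) by ring.
  apply (is_derive_Rmult (fun t => Rpower t s) (fun t => exp (- t))).
  - now apply is_derive_Rpower.
  - auto_derive; [easy | ring].
Qed.

Lemma is_Gamma_succ s l : 0 < s -> is_Gamma s l -> is_Gamma (s + 1) (s * l).
Proof.
  intros Hs Hl.
  set (f := fun t => gamma_integrand (s + 1) t - s * gamma_integrand s t).
  assert (Hf : is_RInt_gen f (at_right 0) (Rbar_locally p_infty) (0 - 0)).
  { apply (is_RInt_gen_0_p_infty_derive (fun t => - (Rpower t s * exp (- t)))).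
    - intros x Hx; unfold f, gamma_integrand; replace (s + 1 - 1) with s by ring.
      replace (Rpower x s * exp (- x) - s * (Rpower x (s - 1) * exp (- x)))
        with (- (s * Rpower x (s - 1) * exp (- x) - Rpower x s * exp (- x))) by ring.
      now apply (is_derive_opp (K := R_AbsRing) (V := R_NormedModule)), is_derive_Rpower_mul_exp.
    - intros x Hx; unfold f.
      apply (lim_minus (gamma_integrand (s + 1)) (fun t => s * gamma_integrand s t));
        [| apply (lim_mult (fun _ => s) (gamma_integrand s)); [apply lim_const |]];
        now apply continuous_gamma_integrand.
    - now apply lim_opp_0, lim_Rpower_mul_exp_0.
    - now apply lim_opp_0, lim_Rpower_mul_exp_p_infty. }
  assert (H := is_RInt_gen_plus _ _ _ _ Hf (is_RInt_gen_scal _ s _ Hl)).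
  replace (s * l) with (plus (0 - 0) (scal s l))
    by (cbv [plus scal]; simpl; unfold mult; simpl; ring).
  eapply is_RInt_gen_ext; [| exact H].
  apply filter_forall; intros ab x _; unfold f, plus, scal; simpl; unfold mult; simpl; ring.
Qed.

Lemma is_Gamma_1 : is_Gamma 1 1.
Proof.
  assert (H : is_Gamma 1 (0 - - exp (- 0))).
  { apply (is_RInt_gen_0_p_infty_derive (fun t => - exp (- t)) _ (- exp (- 0)) 0).
    - intros x Hx; unfold gamma_integrand; rewrite Rminus_diag, Rpower_O by exact Hx.
      auto_derive; [easy | ring].
    - intros x Hx; now apply continuous_gamma_integrand.
    - apply lim_opp, (lim_continuous (fun t => exp (- t))); [| apply lim_at_right_id].
      apply continuous_of_ex_derive; auto_derive; easy.
    - apply lim_opp_0; eapply filterlim_comp; [| apply is_lim_exp_m].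
      intros P [M HM]; exists (- M); intros x Hx; apply HM; lra. }
  now rewrite Ropp_0, exp_0, Rminus_0_l, Ropp_involutive in H.
Qed.

Lemma is_Gamma_nat n : is_Gamma (INR n + 1) (INR (fact n)).
Proof.
  induction n as [|n IH].
  - rewrite Rplus_0_l; exact is_Gamma_1.
  - rewrite S_INR, fact_simpl, mult_INR, S_INR.
    apply is_Gamma_succ; [pose proof (pos_INR n); lra | exact IH].
Qed.

Fixpoint rising_half (n : nat) : R :=
  match n with
  | 0%nat => 1
  | S n => (INR n + / 2) * rising_half n
  end.

Lemma is_Gamma_half_nat n l :
  is_Gamma (/ 2) l -> is_Gamma (INR n + / 2) (l * rising_half n).
Proof.
  intros H; induction n as [|n IH].
  - now rewrite Rplus_0_l, Rmult_1_r.
  - rewrite S_INR; replace (INR n + 1 + / 2) with ((INR n + / 2) + 1) by ring.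
    replace (l * rising_half (S n)) with ((INR n + / 2) * (l * rising_half n)) by (simpl; ring).
    apply is_Gamma_succ; [pose proof (pos_INR n); lra | exact IH].
Qed.

(** * The Gaussian integral *)

Definition gauss (t : R) : R := exp (- t ^ 2).

Definition gauss_integral (x : R) : R := RInt gauss 0 x.

Definition feynman_integrand (x t : R) : R := exp (- x ^ 2 * (1 + t ^ 2)) / (1 + t ^ 2).

Definition feynman_integral (x : R) : R := RInt (feynman_integrand x) 0 1.

Lemma continuous_gauss x : continuous gauss x.
Proof. apply continuous_of_ex_derive; unfold gauss; auto_derive; easy. Qed.

Lemma ex_RInt_gauss a b : ex_RInt gauss a b.
Proof. apply (@ex_RInt_continuous R_CompleteNormedModule); intros; apply continuous_gauss. Qed.

Lemma is_derive_gauss_integral (x : R) : is_derive gauss_integral x (gauss x).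
Proof.
  apply is_derive_RInt with 0; [| apply continuous_gauss].
  apply filter_forall; intros b; apply (@RInt_correct R_CompleteNormedModule), ex_RInt_gauss.
Qed.

Lemma is_derive_feynman_integrand (x t : R) :
  is_derive (fun u => feynman_integrand u t) x (- 2 * x * exp (- x ^ 2 * (1 + t ^ 2))).
Proof.
  pose proof (pow2_ge_0 t); unfold feynman_integrand; auto_derive; [lra |].
  simpl; field; simpl in *; nra.
Qed.

Lemma continuous_feynman_integrand x t : continuous (feynman_integrand x) t.
Proof.
  pose proof (pow2_ge_0 t).
  apply continuous_of_ex_derive; unfold feynman_integrand; auto_derive; lra.
Qed.

Lemma ex_RInt_feynman_integrand x a b : ex_RInt (feynman_integrand x) a b.
Proof.
  apply (@ex_RInt_continuous R_CompleteNormedModule); intros; apply continuous_feynman_integrand.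
Qed.

Lemma continuity_2d_feynman_derivative x t :
  continuity_2d_pt (fun u v => - 2 * u * exp (- u ^ 2 * (1 + v ^ 2))) x t.
Proof.
  apply continuity_2d_pt_mult.
  - apply continuity_2d_pt_mult; [apply continuity_2d_pt_const | apply continuity_2d_pt_id1].
  - apply (continuity_1d_2d_pt_comp exp (fun u v => - u ^ 2 * (1 + v ^ 2)));
      [apply continuity_pt_filterlim, continuous_exp |].
    apply continuity_2d_pt_mult; simpl.
    + apply continuity_2d_pt_opp, continuity_2d_pt_mult; [apply continuity_2d_pt_id1 |].
      apply continuity_2d_pt_mult; [apply continuity_2d_pt_id1 | apply continuity_2d_pt_const].
    + apply continuity_2d_pt_plus; [apply continuity_2d_pt_const |].
      apply continuity_2d_pt_mult; [apply continuity_2d_pt_id2 |].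
      apply continuity_2d_pt_mult; [apply continuity_2d_pt_id2 | apply continuity_2d_pt_const].
Qed.

Lemma is_derive_feynman_integral (x : R) :
  is_derive feynman_integral x (- 2 * gauss x * gauss_integral x).
Proof.
  assert (Hd := is_derive_feynman_integrand).
  assert (Hpt : forall t, Derive (fun u => feynman_integrand u t) x
                          = (- 2 * gauss x) * (x * gauss (x * t + 0))).
  { intros t; etransitivity; [apply is_derive_unique, Hd |]; unfold gauss.
    replace (exp (- x ^ 2 * (1 + t ^ 2))) with (exp (- x ^ 2) * exp (- (x * t + 0) ^ 2))
      by (rewrite <- exp_plus; f_equal; ring).
    ring. }
  unfold feynman_integral.
  replace (- 2 * gauss x * gauss_integral x)
    with (RInt (fun t => Derive (fun u => feynman_integrand u t) x) 0 1).
  - apply (is_derive_RInt_param feynman_integrand 0 1 x).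
    + apply filter_forall; intros y t _; eexists; apply Hd.
    + intros t _; eapply continuity_2d_pt_ext; [| apply continuity_2d_feynman_derivative].
      intros u v; simpl; symmetry; apply is_derive_unique, Hd.
    + apply filter_forall; intros y; apply ex_RInt_feynman_integrand.
  - rewrite (RInt_ext _ _ _ _ (fun t _ => Hpt t)).
    rewrite (@RInt_scal R_CompleteNormedModule), (@RInt_comp_lin R_CompleteNormedModule).
    + unfold gauss_integral; now rewrite Rmult_0_r, !Rplus_0_r, Rmult_1_r.
    + apply ex_RInt_gauss.
    + apply (@ex_RInt_continuous R_CompleteNormedModule); intros z _.
      apply continuous_of_ex_derive; unfold gauss; auto_derive; easy.
Qed.

(* Feynman's trick: the two derivatives cancel, and at [x = 0] the sum is [atan 1]. *)
Lemma gauss_feynman_const (x : R) : gauss_integral x ^ 2 + feynman_integral x = PI / 4.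
Proof.
  set (D := fun y => gauss_integral y ^ 2 + feynman_integral y).
  assert (HD : forall y, is_derive D y 0).
  { intros y; unfold D.
    replace 0 with (2 * gauss y * gauss_integral y + - 2 * gauss y * gauss_integral y) by ring.
    apply (is_derive_plus (K := R_AbsRing) (V := R_NormedModule));
      [| apply is_derive_feynman_integral].
    apply (is_derive_ext (fun t => gauss_integral t * gauss_integral t)); [intros; simpl; ring |].
    replace (2 * gauss y * gauss_integral y)
      with (gauss y * gauss_integral y + gauss_integral y * gauss y) by ring.
    apply is_derive_Rmult; apply is_derive_gauss_integral. }
  assert (HD0 : D 0 = PI / 4).
  { unfold D, gauss_integral, feynman_integral; rewrite RInt_point; simpl.
    rewrite (RInt_ext _ (fun t => / (1 + t ^ 2))).
    2: { intros t _; unfold feynman_integrand; simpl.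
         rewrite !Rmult_0_l, Ropp_0, Rmult_0_l, exp_0; apply Rmult_1_l. }
    rewrite (is_RInt_unique _ 0 1 (atan 1 - atan 0)).
    - rewrite atan_1, atan_0; unfold zero; simpl; ring.
    - apply (is_RInt_derive (V := R_CompleteNormedModule)).
      + intros z _; apply is_derive_Reals, derivable_pt_lim_atan.
      + intros z _; pose proof (pow2_ge_0 z).
        apply continuous_of_ex_derive; auto_derive; lra. }
  fold (D x); rewrite <- HD0.
  destruct (MVT_gen D 0 x (fun _ => 0)) as [c [_ Hc]]; [easy | | lra].
  intros; apply continuity_pt_filterlim, continuous_of_ex_derive; eexists; apply HD.
Qed.

Lemma feynman_integral_bound (x : R) : 0 <= feynman_integral x <= exp (- x ^ 2).
Proof.
  pose proof (pow2_ge_0 x).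
  split.
  - apply RInt_ge_0; [lra | apply ex_RInt_feynman_integrand |].
    intros t _; pose proof (pow2_ge_0 t); unfold feynman_integrand.
    apply Rmult_le_pos; [apply Rlt_le, exp_pos | apply Rlt_le, Rinv_0_lt_compat; lra].
  - replace (exp (- x ^ 2)) with (RInt (fun _ => exp (- x ^ 2)) 0 1)
      by (rewrite RInt_const; cbv [scal]; simpl; unfold mult; simpl; ring).
    apply RInt_le; [lra | apply ex_RInt_feynman_integrand | apply ex_RInt_const |].
    intros t _; pose proof (pow2_ge_0 t); unfold feynman_integrand.
    assert (exp (- x ^ 2 * (1 + t ^ 2)) <= exp (- x ^ 2)).
    { destruct (Req_dec (x ^ 2 * t ^ 2) 0) as [He | He].
      - right; f_equal; nra.
      - left; apply exp_increasing; assert (0 < x ^ 2 * t ^ 2) by nra; nra. }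
    unfold Rdiv; rewrite <- (Rmult_1_r (exp (- x ^ 2))).
    apply Rmult_le_compat; [apply Rlt_le, exp_pos | | easy |].
    + apply Rlt_le, Rinv_0_lt_compat; lra.
    + rewrite <- Rinv_1; apply Rinv_le_contravar; lra.
Qed.

Lemma lim_gauss_integral :
  filterlim gauss_integral (Rbar_locally p_infty) (locally (sqrt PI / 2)).
Proof.
  assert (Hsq : filterlim (fun x => gauss_integral x ^ 2) (Rbar_locally p_infty)
                  (locally (PI / 4))).
  { apply filterlim_ext with (fun x => PI / 4 - feynman_integral x).
    { intros x; rewrite <- (gauss_feynman_const x); ring. }
    apply (lim_eq _ (PI / 4 - 0)); [apply Rminus_0_r |].
    apply lim_minus; [apply lim_const |].
    apply filterlim_locally; intros eps.
    assert (Hexp : filterlim (fun x => exp (- x ^ 2)) (Rbar_locally p_infty) (locally 0)).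
    { eapply filterlim_comp; [| apply is_lim_exp_m].
      intros P [M HM]; exists (Rmax 1 (- M)); intros x Hx; apply HM.
      pose proof (Rmax_l 1 (- M)); pose proof (Rmax_r 1 (- M)); nra. }
    generalize (proj1 (filterlim_locally _ _) Hexp eps); apply filter_imp.
    intros x Hx; pose proof (feynman_integral_bound x); pose proof (exp_pos (- x ^ 2)).
    unfold ball in *; simpl in *; unfold AbsRing_ball, abs, minus, plus, opp in *; simpl in *.
    rewrite Rabs_pos_eq in Hx by lra; rewrite Rabs_pos_eq; lra. }
  apply filterlim_ext_loc with (fun x => sqrt (gauss_integral x ^ 2)).
  { exists 0; intros x Hx; rewrite <- Rsqr_pow2; apply sqrt_Rsqr.
    apply RInt_ge_0; [lra | apply ex_RInt_gauss |].
    intros; unfold gauss; apply Rlt_le, exp_pos. }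
  replace (sqrt PI / 2) with (sqrt (PI / 4)).
  - apply (lim_continuous sqrt (fun x => gauss_integral x ^ 2));
      [apply continuous_sqrt | exact Hsq].
  - rewrite sqrt_div_alt by lra; replace 4 with (2 * 2) by ring; rewrite sqrt_square; lra.
Qed.

Lemma is_Gamma_half : is_Gamma (/ 2) (sqrt PI).
Proof.
  set (phi := fun t => 2 * gauss_integral (sqrt t)).
  assert (H : is_Gamma (/ 2) (2 * (sqrt PI / 2) - phi 0)).
  { apply (is_RInt_gen_0_p_infty_derive phi _ (phi 0) (2 * (sqrt PI / 2))).
    - intros x Hx; assert (Hs : 0 < sqrt x) by now apply sqrt_lt_R0.
      unfold gamma_integrand; replace (/ 2 - 1) with (- / 2) by field.
      rewrite Rpower_Ropp, Rpower_sqrt by exact Hx.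
      replace (/ sqrt x * exp (- x)) with (2 * (/ (2 * sqrt x) * gauss (sqrt x)))
        by (unfold gauss; rewrite <- Rsqr_pow2, Rsqr_sqrt by lra; field; lra).
      apply is_derive_scal, (is_derive_comp gauss_integral sqrt);
        [apply is_derive_gauss_integral | now apply is_derive_Reals, derivable_pt_lim_sqrt].
    - intros x Hx; now apply continuous_gamma_integrand.
    - apply (lim_mult (fun _ => 2)); [apply lim_const |].
      apply (lim_continuous gauss_integral);
        [apply continuous_of_ex_derive; eexists; apply is_derive_gauss_integral |].
      apply (lim_continuous sqrt); [apply continuous_sqrt | apply lim_at_right_id].
    - apply (lim_mult (fun _ => 2)); [apply lim_const |].
      eapply filterlim_comp; [apply filterlim_sqrt_p | apply lim_gauss_integral]. }
  replace (sqrt PI) with (2 * (sqrt PI / 2) - phi 0); [exact H |].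
  unfold phi, gauss_integral; rewrite sqrt_0, RInt_point; unfold zero; simpl; field.
Qed.

(** * Limits at the endpoints of (-1, 1) *)

Lemma locally_open_interval (t : R) : -1 < t < 1 -> locally t (fun s => -1 < s < 1).
Proof. exact (open_and _ _ (open_gt (-1)) (open_lt 1) t). Qed.

Lemma Derive_n_chain (f : R -> R) (G : nat -> R -> R) :
  (forall t, -1 < t < 1 -> f t = G 0%nat t) ->
  (forall m t, -1 < t < 1 -> is_derive (G m) t (G (S m) t)) ->
  forall m t, -1 < t < 1 -> Derive_n f m t = G m t.
Proof.
  intros H0 HG m; induction m as [|m IH]; intros t Ht; [now apply H0 |].
  simpl; rewrite (Derive_ext_loc _ (G m)); [now apply is_derive_unique, HG |].
  apply (filter_imp _ _ IH), locally_open_interval, Ht.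
Qed.

Lemma ex_derive_Derive_n_chain (f : R -> R) (G : nat -> R -> R) :
  (forall t, -1 < t < 1 -> f t = G 0%nat t) ->
  (forall m t, -1 < t < 1 -> is_derive (G m) t (G (S m) t)) ->
  forall m t, -1 < t < 1 -> ex_derive (Derive_n f m) t.
Proof.
  intros H0 HG m t Ht; apply (ex_derive_ext_loc (G m)); [| eexists; now apply HG].
  apply (filter_imp (fun s => -1 < s < 1)); [| now apply locally_open_interval].
  intros s Hs; symmetry; now apply (Derive_n_chain f G).
Qed.

Definition end_filter (F : (R -> Prop) -> Prop) (e : R) : Prop :=
  (e = -1 \/ e = 1) /\ filterlim (fun t => t) F (locally e) /\ F (fun t => -1 < t < 1).

Lemma end_filter_lower : end_filter (at_right (-1)) (-1).
Proof.
  refine (conj (or_introl eq_refl) (conj (lim_at_right_id _) _)).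
  apply filter_and; [now exists posreal_one |].
  apply filter_le_within, (open_lt 1 (-1)); lra.
Qed.

Lemma end_filter_upper : end_filter (at_left 1) 1.
Proof.
  refine (conj (or_intror eq_refl) (conj (lim_at_left_id _) _)).
  apply filter_and; [| now exists posreal_one].
  apply filter_le_within, (open_gt (-1) 1); lra.
Qed.

Section EndFilter.

Context {F : (R -> Prop) -> Prop} {FF : Filter F} {e : R} (HF : end_filter F e).

Lemma end_filter_at_right : e = -1 -> filterlim (fun t => t) F (at_right (-1)).
Proof.
  destruct HF as [_ [Hid Hin]]; intros ->.
  apply lim_within; [exact Hid | apply (filter_imp _ _ (fun t Ht => proj1 Ht) Hin)].
Qed.

Lemma end_filter_at_left : e = 1 -> filterlim (fun t => t) F (at_left 1).
Proof.
  destruct HF as [_ [Hid Hin]]; intros ->.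
  apply lim_within; [exact Hid | apply (filter_imp _ _ (fun t Ht => proj2 Ht) Hin)].
Qed.

Lemma lim_weight : filterlim (fun t => 1 - t ^ 2) F (at_right 0).
Proof.
  destruct HF as [He [Hid Hin]]; apply lim_within.
  - apply (lim_eq _ (1 - e ^ 2)); [destruct He as [He | He]; rewrite He; ring |].
    apply lim_minus; [apply lim_const | now apply lim_pow].
  - eapply filter_imp; [| exact Hin]; intros t Ht; nra.
Qed.

Lemma lim_Rpower_weight s : 0 < s -> filterlim (fun t => Rpower (1 - t ^ 2) s) F (locally 0).
Proof. intros Hs; exact (filterlim_comp _ _ _ _ _ _ _ _ lim_weight (lim_Rpower_0 s Hs)). Qed.

Lemma lim_Rpower_weight_succ (f : R -> R) (s L : R) :
  filterlim (fun t => Rpower (1 - t ^ 2) s * f t) F (locally L) ->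
  filterlim (fun t => Rpower (1 - t ^ 2) (s + 1) * f t) F (locally 0).
Proof.
  intros Hf; destruct HF as [He [Hid Hin]].
  apply filterlim_ext_loc with (fun t => (1 - t ^ 2) * (Rpower (1 - t ^ 2) s * f t)).
  { eapply filter_imp; [| exact Hin]; intros t Ht.
    rewrite Rpower_plus, Rpower_1 by nra; ring. }
  apply (lim_eq _ (0 * L)); [apply Rmult_0_l |].
  apply lim_mult; [| exact Hf].
  apply (filterlim_filter_le_2 _ (filter_le_within _) lim_weight).
Qed.

End EndFilter.

Definition continuous_at_ends (h : R -> R) : Prop :=
  forall F e, Filter F -> end_filter F e -> filterlim h F (locally (h e)).

Lemma continuous_at_ends_of_continuous (h : R -> R) :
  (forall x, continuous h x) -> continuous_at_ends h.
Proof. intros Hh F e FF [_ [Hid _]]; exact (filterlim_comp _ _ _ _ _ _ _ _ Hid (Hh e)). Qed.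

Lemma continuous_at_ends_const (c : R) : continuous_at_ends (fun _ => c).
Proof. apply continuous_at_ends_of_continuous; intros; apply continuous_const. Qed.

Lemma continuous_at_ends_id : continuous_at_ends (fun t => t).
Proof. apply continuous_at_ends_of_continuous; intros; apply continuous_id. Qed.

Lemma continuous_at_ends_plus (f g : R -> R) :
  continuous_at_ends f -> continuous_at_ends g -> continuous_at_ends (fun t => f t + g t).
Proof. intros Hf Hg F e FF HF; apply lim_plus; [apply Hf | apply Hg]; assumption. Qed.

Lemma continuous_at_ends_mult (f g : R -> R) :
  continuous_at_ends f -> continuous_at_ends g -> continuous_at_ends (fun t => f t * g t).
Proof. intros Hf Hg F e FF HF; apply lim_mult; [apply Hf | apply Hg]; assumption. Qed.

Lemma continuous_at_ends_minus (f g : R -> R) :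
  continuous_at_ends f -> continuous_at_ends g -> continuous_at_ends (fun t => f t - g t).
Proof. intros Hf Hg F e FF HF; apply lim_minus; [apply Hf | apply Hg]; assumption. Qed.

Lemma continuous_at_ends_pow (f : R -> R) n :
  continuous_at_ends f -> continuous_at_ends (fun t => f t ^ n).
Proof. intros Hf F e FF HF; now apply lim_pow, Hf. Qed.

Lemma continuous_at_ends_sqrt (f : R -> R) :
  continuous_at_ends f -> continuous_at_ends (fun t => sqrt (f t)).
Proof.
  intros Hf F e FF HF; apply (lim_continuous sqrt f); [apply continuous_sqrt | now apply Hf].
Qed.

Lemma lim_acos_at_left_1 : filterlim acos (at_left 1) (locally 0).
Proof.
  apply filterlim_ext_loc with (fun t => atan (sqrt (1 - t²) / t)).
  { apply filter_le_within, (filter_imp (fun t => 0 < t)); [| apply (open_gt 0 1); lra].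
    intros t Ht; symmetry; now apply acos_atan. }
  rewrite <- acos_1, (acos_atan 1 Rlt_0_1).
  apply (lim_continuous (fun t => atan (sqrt (1 - t²) / t)) (fun t => t));
    [| apply lim_at_left_id].
  apply continuous_atan_comp, (lim_mult (fun t => sqrt (1 - t²)) (fun t => / t)).
  - apply (lim_continuous sqrt (fun t => 1 - t²)); [apply continuous_sqrt |].
    apply (continuous_of_ex_derive (fun t => 1 - t²)); unfold Rsqr; auto_derive; easy.
  - apply (continuous_of_ex_derive (fun t => / t)); auto_derive; lra.
Qed.

Lemma acos_m1 : acos (-1) = PI.
Proof. replace (-1) with (Ropp 1) by ring; rewrite acos_opp, acos_1; ring. Qed.

Lemma continuous_at_ends_acos : continuous_at_ends acos.
Proof.
  intros F e FF HF; destruct (proj1 HF) as [He | He]; rewrite He.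
  - rewrite acos_m1.
    apply filterlim_ext with (fun t => PI - acos (- t)).
    { intros t; rewrite acos_opp; ring. }
    apply (lim_eq _ (PI - 0)); [apply Rminus_0_r |].
    apply lim_minus; [apply lim_const |].
    eapply filterlim_comp; [| apply lim_acos_at_left_1].
    rewrite <- (Ropp_involutive 1).
    exact (filterlim_comp _ _ _ _ _ _ _ _ (end_filter_at_right HF He) (filterlim_Ropp_right (-1))).
  - rewrite acos_1.
    exact (filterlim_comp _ _ _ _ _ _ _ _ (end_filter_at_left HF He) lim_acos_at_left_1).
Qed.

Lemma lim_xlnx_0 : filterlim (fun y => y * ln y) (at_right 0) (locally 0).
Proof.
  apply filterlim_ext_loc with (fun y => ln y * exp (ln y)).
  { now exists posreal_one; intros y _ Hy; rewrite exp_ln by exact Hy; ring. }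
  exact (filterlim_comp _ _ _ _ _ _ _ _ is_lim_ln_0 is_lim_mul_exp_m).
Qed.

(* At [t = 1] the value is [0 * ln 0 = 0], whatever the junk value [ln 0] is. *)
Lemma continuous_at_ends_xlnx : continuous_at_ends (fun t => (1 - t) * ln (1 - t)).
Proof.
  intros F e FF HF; destruct (proj1 HF) as [He | He]; rewrite He.
  - apply (lim_continuous (fun t => (1 - t) * ln (1 - t)) (fun t => t));
      [| rewrite <- He; apply HF].
    apply (continuous_of_ex_derive (fun t => (1 - t) * ln (1 - t))); auto_derive; lra.
  - rewrite Rminus_diag, Rmult_0_l.
    apply (filterlim_comp _ _ _ (fun t => 1 - t) (fun y => y * ln y) F (at_right 0));
      [| exact lim_xlnx_0].
    apply (filterlim_comp _ _ _ (fun t => t) (fun t => 1 - t) F (at_left 1));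
      [exact (end_filter_at_left HF He) |].
    intros P [eps HP]; exists eps; intros y Hy Hlt; apply HP; [| lra].
    revert Hy; unfold ball; simpl; unfold AbsRing_ball, abs, minus, plus, opp; simpl.
    now replace (1 - y + - 0) with (- (y + - 1)) by ring; rewrite Rabs_Ropp.
Qed.

Lemma lim_end_of_eq {F : (R -> Prop) -> Prop} {FF : Filter F} (e : R) (f K : R -> R) :
  end_filter F e -> (forall t, -1 < t < 1 -> f t = K t) -> continuous_at_ends K ->
  filterlim f F (locally (K e)).
Proof.
  intros HF Hf HK; apply filterlim_ext_loc with K; [| now apply HK].
  eapply filter_imp; [| apply HF]; intros t Ht; symmetry; now apply Hf.
Qed.

Lemma limits_at_ends_of_eq (f K : R -> R) (a b : R) :
  (forall t, -1 < t < 1 -> f t = K t) -> continuous_at_ends K -> K (-1) = a -> K 1 = b ->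
  filterlim f (at_right (-1)) (locally a) /\ filterlim f (at_left 1) (locally b).
Proof.
  intros Hf HK <- <-; split; apply lim_end_of_eq;
    solve [apply end_filter_lower | apply end_filter_upper | assumption].
Qed.

Inductive polynomial : (R -> R) -> Prop :=
  | polynomial_const c : polynomial (fun _ => c)
  | polynomial_id : polynomial (fun t => t)
  | polynomial_plus f g : polynomial f -> polynomial g -> polynomial (fun t => f t + g t)
  | polynomial_mult f g : polynomial f -> polynomial g -> polynomial (fun t => f t * g t)
  | polynomial_ext f g : polynomial f -> (forall t, f t = g t) -> polynomial g.

Lemma polynomial_derivable f :
  polynomial f -> (forall x, ex_derive f x) /\ polynomial (Derive f).
Proof.
  induction 1 as [c | | f g _ [Df Pf] _ [Dg Pg] | f g Hf [Df Pf] Hg [Dg Pg] | f g _ [Df Pf] Hfg].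
  - split; [intros; apply ex_derive_const |].
    apply (polynomial_ext (fun _ => 0));
      [apply polynomial_const | intros; now rewrite Derive_const].
  - split; [intros; apply ex_derive_id |].
    apply (polynomial_ext (fun _ => 1)); [apply polynomial_const | intros; now rewrite Derive_id].
  - split.
    { intros; apply (ex_derive_plus (K := R_AbsRing) (V := R_NormedModule));
        [apply Df | apply Dg]. }
    apply (polynomial_ext (fun t => Derive f t + Derive g t)); [now apply polynomial_plus |].
    intros; rewrite Derive_plus; [reflexivity | apply Df | apply Dg].
  - split; [intros; apply ex_derive_mult; [apply Df | apply Dg] |].
    apply (polynomial_ext (fun t => Derive f t * g t + f t * Derive g t)).
    + now apply polynomial_plus; apply polynomial_mult.
    + intros; rewrite Derive_mult; [reflexivity | apply Df | apply Dg].
  - split.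
    { intros x; apply (ex_derive_ext (K := R_AbsRing) (V := R_NormedModule) f g);
        [exact Hfg | apply Df]. }
    apply (polynomial_ext (Derive f)); [exact Pf | intros; now apply Derive_ext].
Qed.

Lemma ex_derive_polynomial f x : polynomial f -> ex_derive f x.
Proof. intros H; now apply polynomial_derivable. Qed.

Lemma polynomial_Derive f : polynomial f -> polynomial (Derive f).
Proof. intros H; now apply polynomial_derivable. Qed.

Lemma continuous_at_ends_polynomial f : polynomial f -> continuous_at_ends f.
Proof.
  intros H; apply continuous_at_ends_of_continuous; intros x.
  now apply continuous_of_ex_derive, ex_derive_polynomial.
Qed.

Definition id_deriv (m : nat) (t : R) : R :=
  match m with 0%nat => t | 1%nat => 1 | _ => 0 end.

Lemma is_derive_id_deriv m (t : R) : is_derive (id_deriv m) t (id_deriv (S m) t).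
Proof. destruct m as [|[|m]]; unfold id_deriv; auto_derive; easy. Qed.

Lemma continuous_id_deriv m x : continuous (id_deriv m) x.
Proof. apply continuous_of_ex_derive; eexists; apply is_derive_id_deriv. Qed.

Definition berg_smooth (j : nat) : Prop :=
  forall m t, -1 < t < 1 -> ex_derive (Derive_n (berg j) m) t.

Definition weight_exponent (j m : nat) : R := (INR j - 3) / 2 + INR m.

Definition weighted_derivative (j m : nat) (s t : R) : R :=
  Rpower (1 - t ^ 2) s * Derive_n (berg j) m t.

Definition edge_constant (j m : nat) : R :=
  - (INR j - 1) * Rpower 2 (INR m - 2) * Gamma (weight_exponent j m)
  / Rpower PI ((INR j - 1) / 2).

Definition edge_limits (j m : nat) : Prop :=
  filterlim (weighted_derivative j m (weight_exponent j m)) (at_right (-1)) (locally 0) /\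
  filterlim (weighted_derivative j m (weight_exponent j m)) (at_left 1)
    (locally (edge_constant j m)).

Definition edge_vanishing (j m : nat) : Prop :=
  filterlim (weighted_derivative j m (weight_exponent j m + 1)) (at_right (-1)) (locally 0) /\
  filterlim (weighted_derivative j m (weight_exponent j m + 1)) (at_left 1) (locally 0).

Lemma edge_vanishing_of_limits j m : edge_limits j m -> edge_vanishing j m.
Proof.
  intros [Hl Hr]; split;
    [apply (lim_Rpower_weight_succ end_filter_lower _ _ _ Hl)
    | apply (lim_Rpower_weight_succ end_filter_upper _ _ _ Hr)].
Qed.

(** * The case j = 2 *)

Fixpoint g2P (m : nat) : R -> R :=
  match m with
  | 0%nat => fun _ => 1
  | S k => fun t => Derive (g2P k) t * (1 - t ^ 2) + (2 * INR k - 1) * t * g2P k t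
  end.

Fixpoint g2Q (m : nat) : R -> R :=
  match m with
  | 0%nat => fun _ => 0
  | S k => fun t => g2P k t + Derive (g2Q k) t * (1 - t ^ 2) + 2 * (INR k - 1) * t * g2Q k t
  end.

Lemma polynomial_weight : polynomial (fun t => 1 - t ^ 2).
Proof.
  apply (polynomial_ext (fun t => 1 + (-1) * (t * t))); [| intros; simpl; ring].
  repeat constructor.
Qed.

Lemma polynomial_g2P m : polynomial (g2P m).
Proof.
  induction m as [|m IH]; simpl; [constructor |].
  apply polynomial_plus; apply polynomial_mult;
    auto using polynomial_Derive, polynomial_weight, polynomial_mult, polynomial_const,
      polynomial_id.
Qed.

Lemma polynomial_g2Q m : polynomial (g2Q m).
Proof.
  induction m as [|m IH]; simpl; [constructor |].
  repeat apply polynomial_plus; try apply polynomial_mult;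
    auto using polynomial_g2P, polynomial_Derive, polynomial_weight, polynomial_mult,
      polynomial_const, polynomial_id.
Qed.

Definition g2_deriv (m : nat) (t : R) : R :=
  / (2 * PI) * (((PI - acos t) * g2P m t * sqrt (1 - t ^ 2) + g2Q m t * (1 - t ^ 2))
                / (1 - t ^ 2) ^ m)
  - / (4 * PI) * id_deriv m t.

Lemma is_derive_acos t : -1 < t < 1 -> is_derive acos t (- / sqrt (1 - t ^ 2)).
Proof.
  intros Ht; apply is_derive_Reals.
  replace (- / sqrt (1 - t ^ 2)) with (-1 / sqrt (1 - t²))
    by (rewrite Rsqr_pow2; field; apply Rgt_not_eq, sqrt_lt_R0; nra).
  apply (derive_pt_eq_1 _ _ _ (derivable_pt_acos t Ht)), derive_pt_acos.
Qed.

Lemma INR_mul_pow_pred m x : x <> 0 -> INR m * x ^ Nat.pred m = INR m * x ^ m / x.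
Proof. intros Hx; destruct m; simpl; field; exact Hx. Qed.

Lemma is_derive_g2_deriv m t : -1 < t < 1 -> is_derive (g2_deriv m) t (g2_deriv (S m) t).
Proof.
  intros Ht; assert (Hw : 0 < 1 - t ^ 2) by nra.
  assert (Hwm : (1 - t ^ 2) ^ m <> 0) by now apply pow_nonzero, Rgt_not_eq.
  unfold g2_deriv; auto_derive.
  { replace (1 + - (t * (t * 1))) with (1 - t ^ 2) by ring.
    split; [eexists; now apply is_derive_acos |].
    split; [apply ex_derive_polynomial, polynomial_g2P |].
    split; [exact Hw |].
    split; [apply ex_derive_polynomial, polynomial_g2Q |].
    split; [exact Hwm |].
    split; [eexists; apply is_derive_id_deriv | easy]. }
  replace (1 + - (t * (t * 1))) with (1 - t ^ 2) by ring.
  replace (Derive (fun x => acos x) t) with (- / sqrt (1 - t ^ 2))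
    by (symmetry; now apply is_derive_unique, is_derive_acos).
  replace (Derive (fun x => id_deriv m x) t) with (id_deriv (S m) t)
    by (symmetry; apply is_derive_unique, is_derive_id_deriv).
  change (Derive (fun x => g2P m x) t) with (Derive (g2P m) t).
  change (Derive (fun x => g2Q m x) t) with (Derive (g2Q m) t).
  rewrite INR_mul_pow_pred by lra.
  change (g2P (S m) t) with (Derive (g2P m) t * (1 - t ^ 2) + (2 * INR m - 1) * t * g2P m t).
  change (g2Q (S m) t)
    with (g2P m t + Derive (g2Q m) t * (1 - t ^ 2) + 2 * (INR m - 1) * t * g2Q m t).
  change ((1 - t ^ 2) ^ S m) with ((1 - t ^ 2) * (1 - t ^ 2) ^ m).
  assert (Hs : sqrt (1 - t ^ 2) * sqrt (1 - t ^ 2) = 1 - t ^ 2) by (apply sqrt_sqrt; lra).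
  assert (Hs0 : 0 < sqrt (1 - t ^ 2)) by now apply sqrt_lt_R0.
  set (w := 1 - t ^ 2) in *; set (s := sqrt w) in *; clearbody s w; subst w.
  pose proof PI_RGT_0; field; repeat split; try lra; now rewrite <- pow_sqr in Hwm.
Qed.

Ltac prove_continuous_at_ends :=
  solve [repeat lazymatch goal with
    | |- continuous_at_ends (fun _ => ?c) => apply (continuous_at_ends_const c)
    | |- continuous_at_ends (fun t => t) => apply continuous_at_ends_id
    | |- continuous_at_ends (fun t => acos t) => apply continuous_at_ends_acos
    | |- continuous_at_ends (fun t => (1 - t) * ln (1 - t)) => apply continuous_at_ends_xlnx
    | |- continuous_at_ends (fun t => id_deriv _ t) =>
        apply continuous_at_ends_of_continuous, continuous_id_deriv
    | |- continuous_at_ends (fun t => g2P _ t) =>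
        apply continuous_at_ends_polynomial, polynomial_g2P
    | |- continuous_at_ends (fun t => g2Q _ t) =>
        apply continuous_at_ends_polynomial, polynomial_g2Q
    | |- continuous_at_ends (fun t => @?f t + @?g t) => apply (continuous_at_ends_plus f g)
    | |- continuous_at_ends (fun t => @?f t - @?g t) => apply (continuous_at_ends_minus f g)
    | |- continuous_at_ends (fun t => @?f t * @?g t) => apply (continuous_at_ends_mult f g)
    | |- continuous_at_ends (fun t => @?f t ^ ?n) => apply (continuous_at_ends_pow f n)
    | |- continuous_at_ends (fun t => sqrt (@?f t)) => apply (continuous_at_ends_sqrt f)
    end].

Lemma g2_eq_deriv_0 t : -1 < t < 1 -> g2 t = g2_deriv 0 t.
Proof. intros _; unfold g2, g2_deriv; simpl; pose proof PI_RGT_0; field; lra. Qed.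

Lemma Derive_n_berg_2 m t : -1 < t < 1 -> Derive_n (berg 2) m t = g2_deriv m t.
Proof. exact (Derive_n_chain g2 g2_deriv g2_eq_deriv_0 is_derive_g2_deriv m t). Qed.

Lemma berg_smooth_2 : berg_smooth 2.
Proof. exact (ex_derive_Derive_n_chain g2 g2_deriv g2_eq_deriv_0 is_derive_g2_deriv). Qed.

Lemma g2P_at_1 n : g2P (S n) 1 = - 2 ^ n * rising_half n.
Proof.
  induction n as [|n IH]; [simpl; ring |].
  change (g2P (S (S n)) 1)
    with (Derive (g2P (S n)) 1 * (1 - 1 ^ 2) + (2 * INR (S n) - 1) * 1 * g2P (S n) 1).
  rewrite IH, S_INR; simpl; field.
Qed.

Lemma Rpower_2_pred n : Rpower 2 (INR (S n) - 2) = 2 ^ n / 2.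
Proof.
  replace (INR (S n) - 2) with (INR n + - (1)) by (rewrite S_INR; ring).
  rewrite Rpower_plus, Rpower_pow, Rpower_Ropp, Rpower_1 by lra; reflexivity.
Qed.

Lemma edge_limits_2 n : edge_limits 2 (S n).
Proof.
  apply (limits_at_ends_of_eq _ (fun t =>
      / (2 * PI) * ((PI - acos t) * g2P (S n) t + g2Q (S n) t * sqrt (1 - t ^ 2))
      - / (4 * PI) * ((1 - t ^ 2) ^ n * sqrt (1 - t ^ 2) * id_deriv (S n) t))).
  - intros t Ht; unfold weighted_derivative, weight_exponent.
    rewrite Derive_n_berg_2 by exact Ht; unfold g2_deriv.
    assert (Hw : 0 < 1 - t ^ 2) by nra.
    assert (Hs : sqrt (1 - t ^ 2) * sqrt (1 - t ^ 2) = 1 - t ^ 2) by (apply sqrt_sqrt; lra).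
    assert (Hs0 : 0 < sqrt (1 - t ^ 2)) by now apply sqrt_lt_R0.
    replace ((INR 2 - 3) / 2 + INR (S n)) with (INR n + / 2) by (rewrite (S_INR n); simpl; field).
    rewrite Rpower_plus, Rpower_pow, Rpower_sqrt by exact Hw.
    change ((1 - t ^ 2) ^ S n) with ((1 - t ^ 2) * (1 - t ^ 2) ^ n).
    assert (Hwn : (1 - t ^ 2) ^ n <> 0) by now apply pow_nonzero, Rgt_not_eq.
    set (w := 1 - t ^ 2) in *; set (s := sqrt w) in *; clearbody s w; subst w.
    pose proof PI_RGT_0; field; lra.
  - prove_continuous_at_ends.
  - rewrite acos_m1; replace (1 - (-1) ^ 2) with 0 by ring; rewrite sqrt_0; ring.
  - unfold edge_constant, weight_exponent.
    rewrite acos_1, g2P_at_1, Rpower_2_pred.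
    replace ((INR 2 - 3) / 2 + INR (S n)) with (INR n + / 2) by (rewrite (S_INR n); simpl; field).
    rewrite (Gamma_eq _ _ (is_Gamma_half_nat n _ is_Gamma_half)).
    replace ((INR 2 - 1) / 2) with (/ 2) by (simpl; field).
    rewrite Rpower_sqrt by apply PI_RGT_0.
    replace (1 - 1 ^ 2) with 0 by ring; rewrite sqrt_0.
    assert (0 < sqrt PI) by apply sqrt_lt_R0, PI_RGT_0.
    pose proof PI_RGT_0; simpl INR; field; lra.
Qed.

Lemma edge_vanishing_2_0 : edge_vanishing 2 0.
Proof.
  apply (limits_at_ends_of_eq _ (fun t =>
      / (2 * PI) * (PI - acos t) * (1 - t ^ 2) - / (4 * PI) * t * sqrt (1 - t ^ 2))).
  - intros t Ht; unfold weighted_derivative, weight_exponent; simpl Derive_n.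
    replace ((INR 2 - 3) / 2 + INR 0 + 1) with (/ 2) by (simpl; field).
    assert (Hw : 0 < 1 - t ^ 2) by nra.
    rewrite Rpower_sqrt by exact Hw; unfold g2.
    rewrite <- (sqrt_sqrt (1 - t ^ 2)) at 3 by lra.
    pose proof PI_RGT_0; field; lra.
  - prove_continuous_at_ends.
  - rewrite acos_m1; replace (1 - (-1) ^ 2) with 0 by ring; rewrite sqrt_0; ring.
  - replace (1 - 1 ^ 2) with 0 by ring; rewrite sqrt_0; ring.
Qed.

(** * The case j = 3 *)

Definition g3_deriv (m : nat) (t : R) : R :=
  match m with
  | 0%nat => g3 t
  | 1%nat => / (2 * PI) * (ln (1 - t) + 1 - / (1 - t) + (4 / 3 - ln 2))
  | S (S k) =>
      / (2 * PI) * (- INR (fact k) / (1 - t) ^ S k - INR (fact (S k)) / (1 - t) ^ S (S k))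
  end.

Lemma is_derive_g3_deriv m t : t < 1 -> is_derive (g3_deriv m) t (g3_deriv (S m) t).
Proof.
  intros Ht; pose proof PI_RGT_0.
  destruct m as [|[|k]]; unfold g3_deriv, g3.
  - auto_derive; [lra |]; replace (1 + - t) with (1 - t) by ring; field; lra.
  - auto_derive; [lra |]; replace (1 + - t) with (1 - t) by ring; simpl; field; lra.
  - assert (Hk : (1 - t) ^ k <> 0) by now apply pow_nonzero, Rgt_not_eq, Rgt_minus.
    auto_derive; replace (1 + - t) with (1 - t) by ring.
    + split; [| split]; [.. | easy]; apply Rmult_integral_contrapositive_currified;
        try apply Rmult_integral_contrapositive_currified; lra.
    + change (match k with 0%nat => 1 | S _ => INR k + 1 end) with (INR (S k)).
      rewrite S_INR; simpl fact; simpl pow; repeat rewrite ?plus_INR, ?mult_INR; field; lra.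
Qed.

Lemma Derive_n_berg_3 m t : -1 < t < 1 -> Derive_n (berg 3) m t = g3_deriv m t.
Proof.
  exact (Derive_n_chain g3 g3_deriv (fun _ _ => eq_refl)
           (fun m t Ht => is_derive_g3_deriv m t (proj2 Ht)) m t).
Qed.

Lemma berg_smooth_3 : berg_smooth 3.
Proof.
  exact (ex_derive_Derive_n_chain g3 g3_deriv (fun _ _ => eq_refl)
           (fun m t Ht => is_derive_g3_deriv m t (proj2 Ht))).
Qed.

Lemma weight_exponent_3 m : weight_exponent 3 m = INR m.
Proof. unfold weight_exponent; simpl; field. Qed.

Lemma edge_constant_3 n : edge_constant 3 (S n) = - 2 ^ n * INR (fact n) / PI.
Proof.
  unfold edge_constant; rewrite weight_exponent_3, Rpower_2_pred, (S_INR n).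
  rewrite (Gamma_eq _ _ (is_Gamma_nat n)).
  replace ((INR 3 - 1) / 2) with 1 by (simpl; field).
  rewrite Rpower_1 by apply PI_RGT_0; pose proof PI_RGT_0; simpl; field; lra.
Qed.

Lemma weighted_derivative_3 m t : -1 < t < 1 ->
  weighted_derivative 3 m (weight_exponent 3 m) t = (1 - t ^ 2) ^ m * g3_deriv m t.
Proof.
  intros Ht; unfold weighted_derivative; rewrite weight_exponent_3, Derive_n_berg_3 by exact Ht.
  rewrite Rpower_pow by nra; reflexivity.
Qed.

Lemma edge_limits_3_1 : edge_limits 3 1.
Proof.
  apply (limits_at_ends_of_eq _ (fun t => / (2 * PI) *
      ((1 + t) * ((1 - t) * ln (1 - t)) + (1 - t ^ 2) * (1 + (4 / 3 - ln 2)) - (1 + t)))).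
  - intros t Ht; rewrite weighted_derivative_3 by exact Ht; pose proof PI_RGT_0.
    simpl; field; lra.
  - prove_continuous_at_ends.
  - ring.
  - rewrite edge_constant_3; simpl; field; apply PI_neq0.
Qed.

Lemma edge_limits_3 n : edge_limits 3 (S (S n)).
Proof.
  apply (limits_at_ends_of_eq _ (fun t => / (2 * PI) *
      ((1 + t) ^ S (S n) * (- INR (fact n) * (1 - t) - INR (fact (S n)))))).
  - intros t Ht; rewrite weighted_derivative_3 by exact Ht; cbn [g3_deriv].
    replace (1 - t ^ 2) with ((1 + t) * (1 - t)) by ring; rewrite Rpow_mult_distr.
    assert ((1 - t) ^ n <> 0) by (apply pow_nonzero; lra).
    pose proof PI_RGT_0; simpl pow; field; lra.
  - prove_continuous_at_ends.
  - replace (1 + -1) with 0 by ring; simpl; ring.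
  - rewrite edge_constant_3, fact_simpl, mult_INR, S_INR.
    replace (1 + 1) with 2 by ring; simpl pow; field; apply PI_neq0.
Qed.

Lemma edge_vanishing_3_0 : edge_vanishing 3 0.
Proof.
  apply (limits_at_ends_of_eq _ (fun t => / (2 * PI) *
      ((1 - t ^ 2) + t * (1 + t) * ((1 - t) * ln (1 - t)) + (4 / 3 - ln 2) * t * (1 - t ^ 2)))).
  - intros t Ht; unfold weighted_derivative.
    rewrite weight_exponent_3, Derive_n_berg_3 by exact Ht; simpl INR.
    rewrite Rplus_0_l, Rpower_1 by nra; unfold g3_deriv, g3; pose proof PI_RGT_0; field; lra.
  - prove_continuous_at_ends.
  - ring.
  - ring.
Qed.

(** * The recurrence from j to j + 2 *)

Definition rec_a (k : nat) : R := (INR k + 1) / (2 * PI).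
Definition rec_b (k : nat) : R := (INR k + 1) / (2 * PI * (INR k - 1)).
Definition rec_c (k : nat) : R := (INR k + 1) / (2 * PI * omega k).

Lemma berg_rec k t : (2 <= k)%nat ->
  berg (S (S k)) t = rec_a k * berg k t + rec_b k * t * Derive (berg k) t + rec_c k * t.
Proof. intros Hk; destruct k as [|[|k]]; [lia | lia | reflexivity]. Qed.

Section Recurrence.

Variable k : nat.
Hypothesis Hk : (2 <= k)%nat.
Hypothesis Hsmooth : berg_smooth k.

Definition rec_deriv (m : nat) (t : R) : R :=
  rec_a k * Derive_n (berg k) m t
  + rec_b k * (t * Derive_n (berg k) (S m) t + INR m * Derive_n (berg k) m t)
  + rec_c k * id_deriv m t.

Lemma is_derive_rec_deriv m t : -1 < t < 1 -> is_derive (rec_deriv m) t (rec_deriv (S m) t).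
Proof.
  intros Ht; unfold rec_deriv.
  assert (HD : forall n, is_derive (Derive_n (berg k) n) t (Derive_n (berg k) (S n) t))
    by (intros; now apply Derive_correct, Hsmooth).
  (* Abstracting [Derive_n (berg k)] keeps [auto_derive] from unfolding [berg]. *)
  revert HD; generalize (Derive_n (berg k)) as D; intros D HD.
  auto_derive.
  - split; [eexists; apply HD |]; split; [eexists; apply HD |].
    split; [eexists; apply HD |]; split; [eexists; apply is_derive_id_deriv | easy].
  - change (Derive (fun x => D m x) t) with (Derive (D m) t).
    change (Derive (fun x => D (S m) x) t) with (Derive (D (S m)) t).
    change (Derive (fun x => id_deriv m x) t) with (Derive (id_deriv m) t).
    rewrite (is_derive_unique _ _ _ (HD m)), (is_derive_unique _ _ _ (HD (S m))).
    rewrite (is_derive_unique _ _ _ (is_derive_id_deriv m t)), S_INR; ring.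
Qed.

Lemma berg_eq_rec_deriv_0 t : -1 < t < 1 -> berg (S (S k)) t = rec_deriv 0 t.
Proof.
  intros _; rewrite berg_rec by exact Hk; unfold rec_deriv; simpl.
  change (Derive (fun x => berg k x) t) with (Derive (berg k) t); ring.
Qed.

Lemma Derive_n_berg_rec m t : -1 < t < 1 -> Derive_n (berg (S (S k))) m t = rec_deriv m t.
Proof. exact (Derive_n_chain _ rec_deriv berg_eq_rec_deriv_0 is_derive_rec_deriv m t). Qed.

Lemma berg_smooth_rec : berg_smooth (S (S k)).
Proof. exact (ex_derive_Derive_n_chain _ rec_deriv berg_eq_rec_deriv_0 is_derive_rec_deriv). Qed.

Lemma weight_exponent_rec m :
  weight_exponent (S (S k)) m = weight_exponent k m + 1
  /\ weight_exponent (S (S k)) m = weight_exponent k (S m).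
Proof. unfold weight_exponent; rewrite !S_INR; split; field. Qed.

Lemma weighted_derivative_rec m t : -1 < t < 1 ->
  weighted_derivative (S (S k)) m (weight_exponent (S (S k)) m) t =
  rec_a k * weighted_derivative k m (weight_exponent k m + 1) t
  + rec_b k * (t * weighted_derivative k (S m) (weight_exponent k (S m)) t
               + INR m * weighted_derivative k m (weight_exponent k m + 1) t)
  + rec_c k * id_deriv m t * Rpower (1 - t ^ 2) (weight_exponent (S (S k)) m).
Proof.
  intros Ht; unfold weighted_derivative; rewrite Derive_n_berg_rec by exact Ht.
  destruct (weight_exponent_rec m) as [<- <-]; unfold rec_deriv; ring.
Qed.

Lemma lim_weighted_derivative_rec {F : (R -> Prop) -> Prop} {FF : Filter F} e m L :
  end_filter F e ->
  filterlim (weighted_derivative k (S m) (weight_exponent k (S m))) F (locally L) ->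
  filterlim (weighted_derivative k m (weight_exponent k m + 1)) F (locally 0) ->
  filterlim (weighted_derivative (S (S k)) m (weight_exponent (S (S k)) m)) F
    (locally (rec_b k * e * L)).
Proof.
  intros HF HL H0.
  assert (Hpos : 0 < weight_exponent (S (S k)) m).
  { unfold weight_exponent; rewrite !S_INR.
    apply le_INR in Hk; pose proof (pos_INR m); simpl in Hk; lra. }
  apply filterlim_ext_loc with (fun t =>
    rec_a k * weighted_derivative k m (weight_exponent k m + 1) t
    + rec_b k * (t * weighted_derivative k (S m) (weight_exponent k (S m)) t
                 + INR m * weighted_derivative k m (weight_exponent k m + 1) t)
    + rec_c k * id_deriv m t * Rpower (1 - t ^ 2) (weight_exponent (S (S k)) m)).
  { eapply filter_imp; [| apply HF]; intros t Ht; symmetry; now apply weighted_derivative_rec. }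
  apply (lim_eq _ (rec_a k * 0 + rec_b k * (e * L + INR m * 0) + rec_c k * id_deriv m e * 0));
    [ring |].
  apply lim_plus; [apply lim_plus |].
  - now apply lim_mult; [apply lim_const |].
  - apply lim_mult; [apply lim_const |].
    apply lim_plus; apply lim_mult; try assumption; [apply HF | apply lim_const].
  - apply lim_mult; [| now apply (lim_Rpower_weight HF)].
    apply lim_mult; [apply lim_const |].
    apply (lim_continuous (id_deriv m) (fun t => t)); [apply continuous_id_deriv | apply HF].
Qed.

Lemma edge_constant_rec m : edge_constant (S (S k)) m = rec_b k * edge_constant k (S m).
Proof.
  unfold edge_constant, rec_b; rewrite <- (proj2 (weight_exponent_rec m)).
  replace (INR (S m) - 2) with (1 + (INR m - 2)) by (rewrite S_INR; ring).
  replace ((INR (S (S k)) - 1) / 2) with (1 + (INR k - 1) / 2) by (rewrite !S_INR; field).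
  rewrite !Rpower_plus, !Rpower_1 by (try apply PI_RGT_0; lra).
  assert (0 < Rpower PI ((INR k - 1) / 2)) by apply exp_pos.
  apply le_INR in Hk; pose proof PI_RGT_0; simpl in Hk.
  rewrite !S_INR; field; repeat split; lra.
Qed.

Lemma edge_limits_rec m :
  edge_limits k (S m) -> edge_vanishing k m -> edge_limits (S (S k)) m.
Proof.
  intros [HL1 HR1] [HL0 HR0]; split.
  - rewrite <- (Rmult_0_r (rec_b k * -1)).
    exact (lim_weighted_derivative_rec _ _ _ end_filter_lower HL1 HL0).
  - rewrite edge_constant_rec, <- (Rmult_1_r (rec_b k)) at 1.
    exact (lim_weighted_derivative_rec _ _ _ end_filter_upper HR1 HR0).
Qed.

End Recurrence.

Definition edge_behaviour (j : nat) : Prop :=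
  berg_smooth j /\ forall m, edge_vanishing j m /\ edge_limits j (S m).

Lemma edge_behaviour_2 : edge_behaviour 2.
Proof.
  split; [exact berg_smooth_2 |]; intros m; split; [| apply edge_limits_2].
  destruct m; [exact edge_vanishing_2_0 | apply edge_vanishing_of_limits, edge_limits_2].
Qed.

Lemma edge_behaviour_3 : edge_behaviour 3.
Proof.
  assert (H3 : forall n, edge_limits 3 (S n))
    by (intros [|n]; [exact edge_limits_3_1 | apply edge_limits_3]).
  split; [exact berg_smooth_3 |]; intros m; split; [| apply H3].
  destruct m; [exact edge_vanishing_3_0 | apply edge_vanishing_of_limits, H3].
Qed.

Lemma edge_behaviour_rec k : (2 <= k)%nat -> edge_behaviour k -> edge_behaviour (S (S k)).
Proof.
  intros Hk [Hs Hm].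
  assert (HL : forall m, edge_limits (S (S k)) m)
    by (intros m; apply edge_limits_rec; try apply Hm; assumption).
  split; [now apply berg_smooth_rec |].
  intros m; split; [apply edge_vanishing_of_limits |]; apply HL.
Qed.

Lemma edge_behaviour_all j : (2 <= j)%nat -> edge_behaviour j.
Proof.
  intros Hj; replace j with ((j - 2) + 2)%nat by lia.
  assert (H : forall n, edge_behaviour (n + 2) /\ edge_behaviour (n + 3)).
  { induction n as [|n [IH2 IH3]]; [split; [exact edge_behaviour_2 | exact edge_behaviour_3] |].
    split; [replace (S n + 2)%nat with (n + 3)%nat by lia; exact IH3 |].
    replace (S n + 3)%nat with (S (S (n + 2))) by lia.
    apply edge_behaviour_rec; [lia | exact IH2]. }
  exact (proj1 (H (j - 2)%nat)).
Qed.

Theorem lemma4p3 (j m : nat) :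
  (2 <= j)%nat ->
  ~ ((j = 2%nat \/ j = 3%nat) /\ m = 0%nat) ->
  filterlim
    (fun t => Rpower (1 - t ^ 2) ((INR j - 3) / 2 + INR m) * Derive_n (berg j) m t)
    (at_right (-1)) (locally 0)
  /\
  filterlim
    (fun t => Rpower (1 - t ^ 2) ((INR j - 3) / 2 + INR m) * Derive_n (berg j) m t)
    (at_left 1)
    (locally (- (INR j - 1) * Rpower 2 (INR m - 2)
              * Gamma ((INR j - 3) / 2 + INR m) / Rpower PI ((INR j - 1) / 2))).
Proof.
  intros Hj Hexc; change (edge_limits j m).
  destruct m as [|m]; [| now apply edge_behaviour_all].
  destruct j as [|[|[|[|k]]]]; try lia; try (exfalso; apply Hexc; tauto).
  destruct (edge_behaviour_all (S (S k))) as [Hs Hm]; [lia |].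
  apply edge_limits_rec; [lia | exact Hs | apply Hm | apply Hm].
Qed.
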